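(* Let ${}_{\mathfrak Y}\mathfrak B_{\mathfrak X}$ be a left-fibrant graph of bisets, and let $\dagger\in\mathfrak Y$, $*\in\mathfrak X$ be vertices. For any vertex $x\in\mathfrak X$ and any $p\in\pi_1(\mathfrak X,x,* )$ let \[S(p)=\bigcup_{z\in\rho^{-1}(x)}\pi_1(\mathfrak Y,\dagger,\lambda(z))\otimes_{\widehat G_{\lambda(z)}}\widehat B_z\otimes_{\widehat G_{\rho(z)}}p,\] viewed as a left $\pi_1(\mathfrak Y,\dagger)$-set and as a subset of the set $S$ whose quotient by the equivalence relation $\sim$ defining the fundamental biset is $\pi_1(\mathfrak B,\dagger,* )$. Then for all such $p_1,p_2$, the relation $\sim$ restricted to $S(p_1)\times S(p_2)$ is the graph of an isomorphism of left $\pi_1(\mathfrak Y,\dagger)$-sets $S(p_1)\to S(p_2)$.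
   Context: Graphs and graphs of groups. A graph is a set $\mathfrak X=V\sqcup E$ with maps $x\mapsto x^-$, $x\mapsto\bar x$ such that $\bar{\bar x}=x$, $x^-\in V$, $x=x^-\iff x=\bar x\iff x\in V$; $x^+=(\bar x)^-$. Graph morphisms commute with $\bar{\ }$ and $^-$ (may send edges to vertices); simplicial if edges go to edges. A graph of groups is a connected graph with groups $G_x$ and homomorphisms $g\mapsto g^-\colon G_x\to G_{x^-}$, $g\mapsto\bar g\colon G_x\to G_{\bar x}$, with $G_x\to G_{\bar x}\to G_x$ the identity and both maps the identity for vertices; $g^+=(\bar g)^-$. Fundamental groupoid $\pi_1(\mathfrak X)$: objects $V$, generated by the $x\in\mathfrak X$ (from $x^-$ to $x^+$) and elements of the $G_v$, relations of the $G_v$, $v=1\in G_v$, $x\bar x=1$, $g^-x=xg^+$. $\pi_1(\mathfrak X,v,w)$: morphisms from $v$ to $w$. $\widehat G_x$: image of $G_x$ in $\pi_1(\mathfrak X)$. Graphs of bisets. A $\mathfrak Y$-$\mathfrak X$ graph of bisets: graph $\mathfrak B$, graph morphisms $\lambda\colon\mathfrak B\to\mathfrak Y$, $\rho\colon\mathfrak B\to\mathfrak X$, $G_{\lambda(z)}$-$G_{\rho(z)}$-bisets $B_z$, and congruences $b\mapsto b^-\colon B_z\to B_{z^-}$, $b\mapsto\bar b\colon B_z\to B_{\bar z}$ (i.e. $(hbg)^-=h^-b^-g^-$, etc.), with $B_z\to B_{\bar z}\to B_z$ the identity and both maps the identity for vertices; $b^+=(\bar b)^-$. $\widehat B_z=\widehat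 G_{\lambda(z)}\otimes_{G_{\lambda(z)}}B_z\otimes_{G_{\rho(z)}}\widehat G_{\rho(z)}$. Let $S=\bigsqcup_{z\in V(\mathfrak B)}\pi_1(\mathfrak Y,\dagger,\lambda(z))\otimes_{\widehat G_{\lambda(z)}}\widehat B_z\otimes_{\widehat G_{\rho(z)}}\pi_1(\mathfrak X,\rho(z),* )$, and let $\sim$ be the equivalence relation on $S$ generated by $q\otimes b^-\otimes p\sim q\lambda(z)\otimes b^+\otimes\overline{\rho(z)}p$ for edges $z\in\mathfrak B$, $b\in B_z$, $q\in\pi_1(\mathfrak Y,\dagger,\lambda(z)^-)$, $p\in\pi_1(\mathfrak X,\rho(z)^-,* )$ ($\lambda(z),\overline{\rho(z)}$ as groupoid morphisms, trivial if vertices); $S/{\sim}$ is the fundamental biset $\pi_1(\mathfrak B,\dagger,* )$. Left-fibrant: $\rho$ simplicial and for every vertex $v\in\mathfrak B$ and edge $f\in\mathfrak X$ with $f^-=\rho(v)$, the map $\bigsqcup_{e\in\rho^{-1}(f),\,e^-=v}G_{\lambda(v)}\otimes_{G_{\lambda(e)}}B_e\to B_v$, $g\otimes b\mapsto gb^-$, is an isomorphism of $G_{\lambda(v)}$-$G_f$-bisets. *)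

From Stdlib Require Import List Relations.
Import ListNotations.
Set Implicit Arguments.

(* Graphs (Serre style, vertices = fixed points of x |-> x^-)          *)
Record Graph := {
  gcar :> Type;
  gbar : gcar -> gcar;
  gminus : gcar -> gcar;
  gbar_inv : forall x, gbar (gbar x) = x;
  gminus_vertex : forall x, gminus (gminus x) = gminus x;
  gvertex_iff : forall x, x = gminus x <-> x = gbar x
}.

Definition isV (X : Graph) (x : X) : Prop := gminus X x = x.
Definition gplus (X : Graph) (x : X) : X := gminus X (gbar X x).
Arguments isV {X} x.
Arguments gplus {X} x.

Inductive epath (X : Graph) : X -> list X -> X -> Prop :=
| ep_nil (v : X) : isV v -> epath X v [] v
| ep_cons (x : X) l w : epath X (gplus x) l w -> epath X (gminus X x) (x :: l) w.
Arguments epath {X} _ _ _.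

(* Graphs of groups.  The family (G_x)_{x in X} is encoded by its total
   space GE with the index map gidx : GE -> X, i.e. G_x = {g | gidx g = x}. *)
Record GraphOfGroups := {
  ggr :> Graph;
  GE : Type;
  gidx : GE -> ggr;
  gmul : GE -> GE -> GE;
  gone : ggr -> GE;
  ginv : GE -> GE;
  gdown : GE -> GE;
  gflip : GE -> GE;
  gone_idx : forall x, gidx (gone x) = x;
  gmul_idx : forall a b, gidx a = gidx b -> gidx (gmul a b) = gidx a;
  ginv_idx : forall a, gidx (ginv a) = gidx a;
  gmulA : forall a b c, gidx a = gidx b -> gidx b = gidx c ->
            gmul (gmul a b) c = gmul a (gmul b c);
  gmul1l : forall a, gmul (gone (gidx a)) a = a;
  gmul1r : forall a, gmul a (gone (gidx a)) = a;
  gmulVl : forall a, gmul (ginv a) a = gone (gidx a);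
  gmulVr : forall a, gmul a (ginv a) = gone (gidx a);
  gdown_idx : forall g, gidx (gdown g) = gminus ggr (gidx g);
  gflip_idx : forall g, gidx (gflip g) = gbar ggr (gidx g);
  gdown_mul : forall a b, gidx a = gidx b -> gdown (gmul a b) = gmul (gdown a) (gdown b);
  gflip_mul : forall a b, gidx a = gidx b -> gflip (gmul a b) = gmul (gflip a) (gflip b);
  gflip_inv : forall g, gflip (gflip g) = g;
  g_vertex_id : forall g, isV (gidx g) -> gdown g = g /\ gflip g = g;
  g_connected : forall v w : ggr, isV v -> isV w -> exists l, epath v l w
}.

Definition gplusG (G : GraphOfGroups) (g : GE G) : GE G := gdown G (gflip G g).

(* Fundamental groupoid pi_1(X): words in the generators x in X and
   g in G_v (v vertex), modulo the defining relations.                 *)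
Inductive letter (G : GraphOfGroups) : Type :=
| LE : ggr G -> letter G
| LG : GE G -> letter G.
Arguments LE {G} _.
Arguments LG {G} _.

Inductive walk (G : GraphOfGroups) : ggr G -> list (letter G) -> ggr G -> Prop :=
| walk_nil (v : ggr G) : isV v -> walk v [] v
| walk_E (x : ggr G) l w : walk (gplus x) l w -> walk (gminus _ x) (LE x :: l) w
| walk_G g l w : walk (gidx G g) l w -> walk (gidx G g) (LG g :: l) w.

Inductive base_rel (G : GraphOfGroups) : list (letter G) -> list (letter G) -> Prop :=
| br_mul g h : base_rel [LG g; LG h] [LG (gmul G g h)]
| br_one v : base_rel [LG (gone G v)] []
| br_vertex v : isV v -> base_rel [LE v] [LG (gone G v)]
| br_inv x : base_rel [LE x; LE (gbar _ x)] []
| br_edge g : base_rel [LG (gdown G g); LE (gidx G g)]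
                       [LE (gidx G g); LG (gplusG G g)].

Inductive pstep (G : GraphOfGroups) (v w : ggr G) : list (letter G) -> list (letter G) -> Prop :=
| ps_intro p q l r : base_rel l r ->
    walk v (p ++ l ++ q) w -> walk v (p ++ r ++ q) w ->
    pstep v w (p ++ l ++ q) (p ++ r ++ q).

Definition peq (G : GraphOfGroups) (v w : ggr G) : relation (list (letter G)) :=
  clos_refl_sym_trans _ (pstep v w).

Definition graph_morphism {A C : Graph} (f : A -> C) : Prop :=
  (forall z, f (gbar A z) = gbar C (f z)) /\ (forall z, f (gminus A z) = gminus C (f z)).

Definition simplicial {A C : Graph} (f : A -> C) : Prop :=
  forall z, ~ isV z -> ~ isV (f z).

(* Graphs of bisets.  As above, the family (B_z) is encoded by its total
   space BE with index map bidx; lact / ract are the left G_{lam z}- and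
   right G_{rho z}-actions on B_z.                                       *)
Record GraphOfBisets (Y X : GraphOfGroups) := {
  bgr : Graph;
  lam : bgr -> ggr Y;
  rho : bgr -> ggr X;
  lam_morph : graph_morphism lam;
  rho_morph : graph_morphism rho;
  BE : Type;
  bidx : BE -> bgr;
  lact : GE Y -> BE -> BE;
  ract : BE -> GE X -> BE;
  bdown : BE -> BE;
  bflip : BE -> BE;
  lact_idx : forall h b, gidx Y h = lam (bidx b) -> bidx (lact h b) = bidx b;
  ract_idx : forall b k, gidx X k = rho (bidx b) -> bidx (ract b k) = bidx b;
  lact_one : forall b, lact (gone Y (lam (bidx b))) b = b;
  lact_mul : forall h1 h2 b, gidx Y h1 = lam (bidx b) -> gidx Y h2 = lam (bidx b) ->
               lact (gmul Y h1 h2) b = lact h1 (lact h2 b);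
  ract_one : forall b, ract b (gone X (rho (bidx b))) = b;
  ract_mul : forall b k1 k2, gidx X k1 = rho (bidx b) -> gidx X k2 = rho (bidx b) ->
               ract b (gmul X k1 k2) = ract (ract b k1) k2;
  lract_comm : forall h b k, gidx Y h = lam (bidx b) -> gidx X k = rho (bidx b) ->
               lact h (ract b k) = ract (lact h b) k;
  bdown_idx : forall b, bidx (bdown b) = gminus _ (bidx b);
  bflip_idx : forall b, bidx (bflip b) = gbar _ (bidx b);
  bdown_lact : forall h b, gidx Y h = lam (bidx b) -> bdown (lact h b) = lact (gdown Y h) (bdown b);
  bdown_ract : forall b k, gidx X k = rho (bidx b) -> bdown (ract b k) = ract (bdown b) (gdown X k);
  bflip_lact : forall h b, gidx Y h = lam (bidx b) -> bflip (lact h b) = lact (gflip Y h) (bflip b);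
  bflip_ract : forall b k, gidx X k = rho (bidx b) -> bflip (ract b k) = ract (bflip b) (gflip X k);
  bflip_inv : forall b, bflip (bflip b) = b;
  b_vertex_id : forall b, isV (bidx b) -> bdown b = b /\ bflip b = b
}.

Arguments bgr {Y X} _.
Arguments lam {Y X} _ _.
Arguments rho {Y X} _ _.
Arguments BE {Y X} _.
Arguments bidx {Y X} _ _.
Arguments lact {Y X} _ _ _.
Arguments ract {Y X} _ _ _.
Arguments bdown {Y X} _ _.
Arguments bflip {Y X} _ _.

Section Bisets.
Variables (Y X : GraphOfGroups) (B : GraphOfBisets Y X).

Definition bplus (b : BE B) : BE B := bdown B (bflip B b).

(* For a vertex v of B and an edge f of X with f^- = rho v,
   the domain of the map is  G_{lam v} (x)_{G_{lam e}} B_e  summed over the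
   edges e with rho e = f, e^- = v; an element g (x) b is represented by the
   pair (g, b) with b in B_e (so e = bidx b).                            *)
Definition fib_dom (v : bgr B) (f : ggr X) (gb : GE Y * BE B) : Prop :=
  gidx Y (fst gb) = lam B v /\ rho B (bidx B (snd gb)) = f /\
  gminus _ (bidx B (snd gb)) = v.

Inductive fib_step (v : bgr B) (f : ggr X) : GE Y * BE B -> GE Y * BE B -> Prop :=
| fs_intro g h b : fib_dom v f (gmul Y g (gdown Y h), b) -> fib_dom v f (g, lact B h b) ->
    gidx Y h = lam B (bidx B b) ->
    fib_step v f (gmul Y g (gdown Y h), b) (g, lact B h b).

Definition fib_eq (v : bgr B) (f : ggr X) := clos_refl_sym_trans _ (fib_step v f).

Definition fib_map (gb : GE Y * BE B) : BE B := lact B (fst gb) (bdown B (snd gb)).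

Definition left_fibrant : Prop :=
  simplicial (rho B) /\
  forall (v : bgr B) (f : ggr X), isV v -> ~ isV f -> gminus _ f = rho B v ->
    (forall c, bidx B c = v -> exists gb, fib_dom v f gb /\ fib_map gb = c) /\
    (forall gb1 gb2, fib_dom v f gb1 -> fib_dom v f gb2 ->
       fib_map gb1 = fib_map gb2 -> fib_eq v f gb1 gb2).

(* The set S.  An element q (x) b (x) p of
     pi_1(Y,dag,lam z) (x) hat B_z (x) pi_1(X, rho z, star),  z = bidx b a vertex,
   is represented by the raw triple (q, b, p).                          *)
Definition triple := (list (letter Y) * BE B * list (letter X))%type.

Definition inS (dag : ggr Y) (star : ggr X) (s : triple) : Prop :=
  let '(q, b, p) := s in
  isV (bidx B b) /\ walk dag q (lam B (bidx B b)) /\ walk (rho B (bidx B b)) p star.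

(* generating relation of the tensor product (equality in S) *)
Inductive tstep (dag : ggr Y) (star : ggr X) : triple -> triple -> Prop :=
| ts_q q q' b p : inS dag star (q, b, p) -> peq dag (lam B (bidx B b)) q q' ->
    inS dag star (q', b, p) -> tstep dag star (q, b, p) (q', b, p)
| ts_p q b p p' : inS dag star (q, b, p) -> peq (rho B (bidx B b)) star p p' ->
    inS dag star (q, b, p') -> tstep dag star (q, b, p) (q, b, p')
| ts_l q h b p : gidx Y h = lam B (bidx B b) -> inS dag star (q ++ [LG h], b, p) ->
    tstep dag star (q ++ [LG h], b, p) (q, lact B h b, p)
| ts_r q b k p : gidx X k = rho B (bidx B b) -> inS dag star (q, ract B b k, p) ->
    tstep dag star (q, ract B b k, p) (q, b, LG k :: p).

Definition teq dag star : relation triple := clos_refl_sym_trans _ (tstep dag star).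

Inductive sim_step (dag : ggr Y) (star : ggr X) : triple -> triple -> Prop :=
| ss_edge q b p : ~ isV (bidx B b) ->
    inS dag star (q, bdown B b, p) ->
    inS dag star (q ++ [LE (lam B (bidx B b))], bplus b, LE (gbar _ (rho B (bidx B b))) :: p) ->
    sim_step dag star (q, bdown B b, p)
                      (q ++ [LE (lam B (bidx B b))], bplus b, LE (gbar _ (rho B (bidx B b))) :: p).

Definition sim dag star : relation triple :=
  clos_refl_sym_trans _ (fun s t => tstep dag star s t \/ sim_step dag star s t).

Definition inSp (dag : ggr Y) (star : ggr X) (x : ggr X) (p : list (letter X)) (s : triple) : Prop :=
  inS dag star s /\
  exists q b, isV (bidx B b) /\ rho B (bidx B b) = x /\
              inS dag star (q, b, p) /\ teq dag star s (q, b, p).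

Definition act (g : list (letter Y)) (s : triple) : triple :=
  let '(q, b, p) := s in (g ++ q, b, p).

End Bisets.

Arguments inS {Y X} B dag star s.
Arguments inSp {Y X} B dag star x p s.
Arguments teq {Y X} B dag star _ _.
Arguments sim {Y X} B dag star _ _.
Arguments act {Y X} B g s.
Arguments fib_eq {Y X} B v f _ _.
Arguments fib_dom {Y X} B v f gb.
Arguments fib_map {Y X} B gb.

(* Left-fibrancy lets one push an element q (x) b of pi_1(Y,dag,lam z) (x) B_z across an
   edge f of X leaving rho z: write b = g b'^- with b' in B_e and rho e = f, which is unique
   up to the tensor relation, and move to q g lam(e) (x) b'^+; the vertex groups of X act on
   the right.  This respects the tensor relations and the relations of pi_1(X), so it is a
   right action of the groupoid pi_1(X).  Every q (x) b (x) p is ~-equivalent to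
   (q (x) b).p (x) 1, and ~ does not change (q (x) b).p.  Hence s |-> s.p identifies the
   ~-classes meeting S(p) with the elements over *, for every p, and the bijection
   S(p1) -> S(p2) is (.p1) followed by (.p2^-1); it commutes with the left action of
   pi_1(Y,dag) because all the relations do. *)

From Stdlib Require Import List Relations ClassicalEpsilon.
Import ListNotations.
Set Implicit Arguments.

Lemma clos_rst_invariant {A} (R : relation A) (I : A -> Prop) (Q : relation A) :
  (forall x y, R x y -> (I x <-> I y)) ->
  (forall x, Q x x) -> (forall x y, Q x y -> Q y x) ->
  (forall x y z, Q x y -> Q y z -> Q x z) ->
  (forall x y, R x y -> I x -> Q x y) ->
  forall x y, clos_refl_sym_trans _ R x y -> I x -> Q x y.
Proof.
  intros HI Qr Qs Qt HR x y H.
  enough ((I x <-> I y) /\ (I x -> Q x y)) by tauto.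
  induction H as [x y H| x | x y H [IH1 IH2] | x y z H [IH1 IH2] H' [IH3 IH4]].
  - split; [apply HI|]; auto.
  - split; [tauto|auto].
  - split; [tauto|]. intro; apply Qs; apply IH2; tauto.
  - split; [tauto|]. intro; eapply Qt; [apply IH2 | apply IH4]; tauto.
Qed.

Section Graphs.
Variable A : Graph.
Implicit Type x : A.

Lemma isV_gminus x : isV (gminus A x).
Proof. apply gminus_vertex. Qed.

Lemma gbar_isV x : isV x -> gbar A x = x.
Proof. intro H. symmetry. apply gvertex_iff. auto. Qed.

Lemma isV_gbar x : isV (gbar A x) -> isV x.
Proof.
  unfold isV. intro H. symmetry in H. apply gvertex_iff in H.
  rewrite gbar_inv in H. symmetry. apply gvertex_iff. auto.
Qed.

Lemma gplus_isV x : isV x -> gplus x = x.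
Proof. intro H. unfold gplus. rewrite gbar_isV; auto. Qed.

End Graphs.

Section Groupoid.
Variable G : GraphOfGroups.
Implicit Types (v w u z : ggr G) (l : list (letter G)).

Lemma walk_E' x v l w : v = gminus G x -> walk (gplus x) l w -> walk v (LE x :: l) w.
Proof. intros ->; apply walk_E. Qed.

Lemma walk_G' g v l w : v = gidx G g -> walk v l w -> walk v (LG g :: l) w.
Proof. intros ->; apply walk_G. Qed.

Lemma walk_nil' v w : v = w -> isV v -> walk v [] w.
Proof. intros ->; apply walk_nil. Qed.

Lemma walk_start v l w : walk v l w -> isV v.
Proof. induction 1; auto. apply isV_gminus. Qed.

Lemma walk_end v l w : walk v l w -> isV w.
Proof. induction 1; auto. Qed.

Lemma walk_app v l w l' u : walk v l w -> walk w l' u -> walk v (l ++ l') u.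
Proof. induction 1; simpl; intros; auto; constructor; auto. Qed.

Lemma walk_split v l l' u : walk v (l ++ l') u -> exists w, walk v l w /\ walk w l' u.
Proof.
  revert v. induction l as [|a l IH]; simpl; intros v H.
  - exists v. split; auto. constructor. eapply walk_start; eauto.
  - inversion H as [|x l0 w0 H3|g l0 w0 H3]; subst;
      destruct (IH _ H3) as (w' & H5 & H6); exists w'; split; auto; constructor; auto.
Qed.

Lemma walk_nil_inv v w : walk v [] w -> v = w.
Proof. intro H; inversion H; auto. Qed.

Lemma walk_consE x v l w : walk v (LE x :: l) w -> v = gminus G x /\ walk (gplus x) l w.
Proof. intro H; inversion H; auto. Qed.

Lemma walk_consG g v l w : walk v (LG g :: l) w -> v = gidx G g /\ walk v l w.
Proof. intro H; inversion H; subst; auto. Qed.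

Lemma walk_snocG g v l w : walk v (l ++ [LG g]) w -> walk v l (gidx G g) /\ w = gidx G g.
Proof.
  intro H. destruct (walk_split _ _ H) as (u & H1 & H2).
  apply walk_consG in H2 as [-> H2]. apply walk_nil_inv in H2. auto.
Qed.

Lemma walk_snocE x v l w : walk v (l ++ [LE x]) w -> walk v l (gminus G x) /\ w = gplus x.
Proof.
  intro H. destruct (walk_split _ _ H) as (u & H1 & H2).
  apply walk_consE in H2 as [-> H2]. apply walk_nil_inv in H2. auto.
Qed.

Lemma peq_sym v w l l' : peq v w l l' -> peq v w l' l.
Proof. apply rst_sym. Qed.

Lemma peq_trans v w l1 l2 l3 : peq v w l1 l2 -> peq v w l2 l3 -> peq v w l1 l3.
Proof. apply rst_trans. Qed.

Lemma peq_base L R v w : base_rel L R -> walk v L w -> walk v R w -> peq v w L R.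
Proof.
  intros HB H1 H2. pose proof (ps_intro (v:=v) (w:=w) [] [] HB) as K.
  simpl in K; rewrite !app_nil_r in K. apply rst_step, K; auto.
Qed.

Lemma peq_ctx v w l l' u z a b : peq v w l l' -> walk u a v -> walk w b z ->
  peq u z (a ++ l ++ b) (a ++ l' ++ b).
Proof.
  intros H Ha Hb. induction H as [x y H| | |].
  - destruct H as [P Q L R HB H1 H2]. apply rst_step.
    replace (a ++ (P ++ L ++ Q) ++ b) with ((a ++ P) ++ L ++ (Q ++ b))
      by (rewrite <- !app_assoc; auto).
    replace (a ++ (P ++ R ++ Q) ++ b) with ((a ++ P) ++ R ++ (Q ++ b))
      by (rewrite <- !app_assoc; auto).
    constructor; [exact HB| |]; rewrite <- !app_assoc; (eapply walk_app; [eauto|]);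
      rewrite !app_assoc; (eapply walk_app; [|eauto]); rewrite <- !app_assoc; auto.
  - apply rst_refl.
  - apply rst_sym; auto.
  - eapply rst_trans; eauto.
Qed.

Lemma peq_ctx_base u z v w a L R b l r : base_rel L R ->
  walk u a v -> walk v L w -> walk v R w -> walk w b z ->
  l = a ++ L ++ b -> r = a ++ R ++ b -> peq u z l r.
Proof.
  intros HB Ha H1 H2 Hb -> ->. apply (peq_ctx (v:=v) (w:=w)); auto. apply peq_base; auto.
Qed.

Lemma peq_prefix u v w a l l' : peq v w l l' -> walk u a v -> isV w ->
  peq u w (a ++ l) (a ++ l').
Proof.
  intros H Ha Hw. rewrite <- (app_nil_r l), <- (app_nil_r l').
  apply (peq_ctx (b := []) H); auto. constructor; auto.
Qed.

Lemma peq_suffix v w z l l' b : isV v -> peq v w l l' -> walk w b z ->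
  peq v z (l ++ b) (l' ++ b).
Proof. intros Hv H Hb. apply (peq_ctx (a := []) H); auto. constructor; auto. Qed.

Definition letter_inv (a : letter G) : letter G :=
  match a with LE x => LE (gbar G x) | LG g => LG (ginv G g) end.

Definition word_inv l := rev (map letter_inv l).

Lemma ginvK g : ginv G (ginv G g) = g.
Proof.
  transitivity (gmul G (ginv G (ginv G g)) (gmul G (ginv G g) g)).
  - rewrite gmulVl, <- (ginv_idx G g), <- (ginv_idx G (ginv G g)), gmul1r. auto.
  - rewrite <- gmulA by (rewrite !ginv_idx; auto). rewrite gmulVl, ginv_idx, gmul1l. auto.
Qed.

Lemma word_invK l : word_inv (word_inv l) = l.
Proof.
  unfold word_inv. rewrite map_rev, rev_involutive, map_map.
  induction l as [|[x|g] l IH]; simpl; f_equal; auto.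
  - rewrite gbar_inv; auto.
  - rewrite ginvK; auto.
Qed.

Lemma word_inv_cons a l : word_inv (a :: l) = word_inv l ++ [letter_inv a].
Proof. reflexivity. Qed.

Lemma walk_inv v l w : walk v l w -> walk w (word_inv l) v.
Proof.
  induction 1 as [|x l w _ IH|g l w H IH]; rewrite ?word_inv_cons; [constructor; auto| |];
    eapply walk_app; eauto; simpl.
  - apply walk_E'; unfold gplus; rewrite ?gbar_inv; auto. constructor. apply isV_gminus.
  - apply walk_G'; [rewrite ginv_idx; auto|]. constructor. eapply walk_start; eauto.
Qed.

Lemma peq_letter_inv a v w : walk v [a] w -> peq v v [a; letter_inv a] [].
Proof.
  destruct a as [x|g]; simpl; intro H.
  - apply walk_consE in H as [-> _]. apply peq_base; [apply br_inv| |].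
    + apply walk_E, walk_E'; unfold gplus; rewrite ?gbar_inv; auto.
      constructor. apply isV_gminus.
    + constructor. apply isV_gminus.
  - apply walk_consG in H as [-> H]. assert (HV : isV (gidx G g)) by (eapply walk_start; eauto).
    apply peq_trans with [LG (gone G (gidx G g))].
    + rewrite <- (gmulVr G g). apply peq_base; [apply br_mul| |].
      * apply walk_G, walk_G'; [rewrite ginv_idx; auto|]. constructor; auto.
      * apply walk_G'; [rewrite gmul_idx; rewrite ?ginv_idx; auto|]. constructor; auto.
    + apply peq_base; [apply br_one| |].
      * apply walk_G'; [rewrite gone_idx; auto|]. constructor; auto.
      * constructor; auto.
Qed.

Lemma peq_word_inv_r v l w : walk v l w -> peq v v (l ++ word_inv l) [].
Proof.
  induction 1 as [v Hv|x l w Hl IH|g l w Hl IH]; [apply rst_refl| |]; rewrite word_inv_cons.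
  - assert (Ha : walk (gminus G x) [LE x] (gplus x))
      by (constructor; constructor; eapply walk_start; eauto).
    apply peq_trans with ([LE x] ++ [] ++ [letter_inv (LE x)]); [|apply (peq_letter_inv Ha)].
    change ((LE x :: l) ++ ?r) with ([LE x] ++ l ++ r). rewrite (app_assoc l).
    eapply peq_ctx; eauto. simpl. apply walk_E'; unfold gplus; rewrite ?gbar_inv; auto.
    constructor. apply isV_gminus.
  - assert (Ha : walk (gidx G g) [LG g] (gidx G g))
      by (constructor; constructor; eapply walk_start; eauto).
    apply peq_trans with ([LG g] ++ [] ++ [letter_inv (LG g)]); [|apply (peq_letter_inv Ha)].
    change ((LG g :: l) ++ ?r) with ([LG g] ++ l ++ r). rewrite (app_assoc l).
    eapply peq_ctx; eauto. simpl. apply walk_G'; [rewrite ginv_idx; auto|].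
    constructor. eapply walk_start; eauto.
Qed.

End Groupoid.

Section Morphisms.
Variables (Y X : GraphOfGroups) (B : GraphOfBisets Y X).

Lemma lam_gbar z : lam B (gbar _ z) = gbar _ (lam B z). Proof. apply (proj1 (lam_morph B)). Qed.
Lemma lam_gminus z : lam B (gminus _ z) = gminus _ (lam B z). Proof. apply (proj2 (lam_morph B)). Qed.
Lemma rho_gbar z : rho B (gbar _ z) = gbar _ (rho B z). Proof. apply (proj1 (rho_morph B)). Qed.
Lemma rho_gminus z : rho B (gminus _ z) = gminus _ (rho B z). Proof. apply (proj2 (rho_morph B)). Qed.

Lemma isV_lam z : isV z -> isV (lam B z).
Proof. unfold isV. intro H. rewrite <- lam_gminus, H. auto. Qed.

Lemma isV_rho z : isV z -> isV (rho B z).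
Proof. unfold isV. intro H. rewrite <- rho_gminus, H. auto. Qed.

Lemma bplus_bflip b : bplus B (bflip B b) = bdown B b.
Proof. unfold bplus. rewrite bflip_inv. auto. Qed.

End Morphisms.

Ltac norm_idx := unfold gplus, bplus, gplusG in *;
  repeat (rewrite ?lam_gbar, ?lam_gminus, ?rho_gbar, ?rho_gminus, ?bdown_idx, ?bflip_idx,
    ?gbar_inv, ?gminus_vertex, ?gdown_idx, ?gflip_idx, ?gone_idx, ?ginv_idx, ?bflip_inv,
    ?gflip_inv in *).

Ltac auto_idx := norm_idx; auto using isV_gminus, isV_lam;
  try (rewrite gmul_idx by (norm_idx; congruence)); norm_idx; try congruence.

Ltac auto_walk := rewrite <- ?app_assoc; simpl;
  repeat first [ eassumption | eapply walk_app; [eassumption|] | apply walk_E' | apply walk_G'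
               | apply walk_nil' | apply isV_gminus ];
  auto_idx.

Section Transport.
Variables (Y X : GraphOfGroups) (B : GraphOfBisets Y X) (dag : ggr Y).

(* [(q, b)] stands for q (x) b in pi_1(Y, dag, lam z) (x) B_z, z = bidx b. *)
Definition half := (list (letter Y) * BE B)%type.

Definition half_ok (t : half) :=
  isV (bidx B (snd t)) /\ walk dag (fst t) (lam B (bidx B (snd t))).

Definition half_base (t : half) := rho B (bidx B (snd t)).

Inductive half_step : half -> half -> Prop :=
| hs_q q q' c : half_ok (q, c) -> half_ok (q', c) -> peq dag (lam B (bidx B c)) q q' ->
    half_step (q, c) (q', c)
| hs_l q h c : gidx Y h = lam B (bidx B c) -> half_ok (q ++ [LG h], c) ->
    half_step (q ++ [LG h], c) (q, lact B h c).

Definition half_eq := clos_refl_sym_trans _ half_step.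

Lemma half_eq_refl t : half_eq t t. Proof. apply rst_refl. Qed.
Lemma half_eq_sym t t' : half_eq t t' -> half_eq t' t. Proof. apply rst_sym. Qed.
Lemma half_eq_trans t1 t2 t3 : half_eq t1 t2 -> half_eq t2 t3 -> half_eq t1 t3.
Proof. apply rst_trans. Qed.

Lemma half_ok_lact q h c : half_ok (q ++ [LG h], c) -> gidx Y h = lam B (bidx B c) ->
  half_ok (q, lact B h c).
Proof.
  intros [H1 H2] Hh. simpl in *. apply walk_snocG in H2 as [H2 _].
  split; simpl; rewrite lact_idx; congruence.
Qed.

Lemma half_step_bidx t t' : half_step t t' -> bidx B (snd t) = bidx B (snd t').
Proof. destruct 1; simpl; auto. rewrite lact_idx; auto. Qed.

Lemma half_step_ok t t' : half_step t t' -> half_ok t /\ half_ok t'.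
Proof. destruct 1; auto. split; auto. apply half_ok_lact; auto. Qed.

Lemma half_step_ok_iff t t' : half_step t t' -> (half_ok t <-> half_ok t').
Proof. intro H. pose proof (half_step_ok H). tauto. Qed.

Lemma half_eq_teq star t t' p : half_eq t t' -> half_ok t -> walk (half_base t) p star ->
  teq B dag star (t, p) (t', p).
Proof.
  intros H Hok Hw.
  refine (@clos_rst_invariant _ half_step (fun t => half_ok t /\ walk (half_base t) p star)
          (fun x y => teq B dag star (x, p) (y, p)) _ _ _ _ _ t t' H (conj Hok Hw)).
  - intros x y Hxy. unfold half_base. rewrite (half_step_bidx Hxy), (half_step_ok_iff Hxy). tauto.
  - intros; apply rst_refl.
  - intros; apply rst_sym; auto.
  - intros; eapply rst_trans; eauto.
  - intros x y Hxy [Hx Hx']. apply rst_step.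
    destruct Hxy as [q q' c [] [] Hp| q h c Hh []]; [apply ts_q|apply ts_l]; repeat split; auto.
Qed.

Hypothesis HLF : left_fibrant B.

Definition decomp (f : ggr X) (c : BE B) (gb : GE Y * BE B) :=
  fib_dom B (bidx B c) f gb /\ fib_map B gb = c.

Definition edge_image (q : list (letter Y)) (gb : GE Y * BE B) : half :=
  (q ++ [LG (fst gb); LE (lam B (bidx B (snd gb)))], bplus B (snd gb)).

(* The fallback branch is never taken at a vertex over f^-, by left-fibrancy. *)
Definition transfer_edge (f : ggr X) (t : half) : half :=
  match excluded_middle_informative (exists gb, decomp f (snd t) gb) with
  | left H => edge_image (fst t) (proj1_sig (constructive_indefinite_description _ H))
  | right _ => t
  end.

Definition transfer (a : letter X) (t : half) : half :=
  match a with
  | LG k => (fst t, ract B (snd t) k)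
  | LE f => if excluded_middle_informative (isV f) then t else transfer_edge f t
  end.

Definition transport (l : list (letter X)) (t : half) : half :=
  fold_left (fun t a => transfer a t) l t.

Lemma transport_app l l' t : transport (l ++ l') t = transport l' (transport l t).
Proof. apply fold_left_app. Qed.

Lemma transport_cons a l t : transport (a :: l) t = transport l (transfer a t).
Proof. reflexivity. Qed.

Lemma rho_not_isV z : ~ isV z -> ~ isV (rho B z).
Proof. apply (proj1 HLF). Qed.

Lemma gbar_rho_not_isV z : ~ isV z -> ~ isV (gbar _ (rho B z)).
Proof. intros Hz H. apply isV_gbar in H. revert H. apply rho_not_isV; auto. Qed.

Lemma decomp_exists c f : isV (bidx B c) -> ~ isV f -> gminus _ f = rho B (bidx B c) ->
  exists gb, decomp f c gb.
Proof.
  intros H1 H2 H3. destruct (proj2 HLF _ _ H1 H2 H3) as [Hs _].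
  destruct (Hs c eq_refl) as [gb [? ?]]. exists gb. split; auto.
Qed.

Lemma decomp_unique c f gb1 gb2 : isV (bidx B c) -> ~ isV f -> gminus _ f = rho B (bidx B c) ->
  decomp f c gb1 -> decomp f c gb2 -> fib_eq B (bidx B c) f gb1 gb2.
Proof.
  intros H1 H2 H3 [Ha Hb] [Hc Hd]. apply (proj2 (proj2 HLF _ _ H1 H2 H3)); congruence.
Qed.

Lemma edge_image_ok q v f gb : isV v -> walk dag q (lam B v) -> fib_dom B v f gb ->
  half_ok (edge_image q gb) /\ half_base (edge_image q gb) = gplus f.
Proof.
  destruct gb as [g b]. intros Hv Hq (H1 & H2 & H3). simpl in *. subst v f.
  unfold half_ok, half_base, edge_image; simpl. split; [split|]; auto_walk.
Qed.

Lemma edge_image_peq q q' v f gb : isV v -> walk dag q (lam B v) -> walk dag q' (lam B v) ->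
  peq dag (lam B v) q q' -> fib_dom B v f gb -> half_eq (edge_image q gb) (edge_image q' gb).
Proof.
  intros Hv Hq Hq' Hp Hd.
  destruct (edge_image_ok Hv Hq Hd) as [G1 _], (edge_image_ok Hv Hq' Hd) as [G2 _].
  apply rst_step. apply hs_q; auto.
  destruct gb as [g b], Hd as (H1 & H2 & H3). simpl in *. subst v f.
  apply peq_suffix with (w := lam B (gminus _ (bidx B b))); [eapply walk_start; eauto|auto|auto_walk].
Qed.

(* The tensor relation over G_{lam e} is carried to equality in pi_1(Y) by g^- e = e g^+. *)
Lemma fib_step_edge_image q v f gb gb' : isV v -> walk dag q (lam B v) ->
  fib_step B v f gb gb' -> half_eq (edge_image q gb) (edge_image q gb').
Proof.
  intros Hv Hq Hs. destruct Hs as [g h b (H1 & H2 & H3) (H4 & _) Hh]. simpl in *. subst v f.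
  rewrite gmul_idx in H1 by auto_idx.
  assert (Hpl : bplus B (lact B h b) = lact B (gplusG Y h) (bplus B b)).
  { unfold bplus, gplusG. rewrite bflip_lact, bdown_lact; auto_idx. }
  unfold edge_image; simpl. rewrite lact_idx, Hpl by auto.
  apply rst_trans with ((q ++ [LG g; LE (lam B (bidx B b))]) ++ [LG (gplusG Y h)], bplus B b);
    apply rst_step; [apply hs_q| apply hs_l]; try (split; simpl; auto_walk); try solve [auto_idx].
  apply peq_trans with (q ++ [LG g; LG (gdown Y h); LE (lam B (bidx B b))]).
  - apply peq_sym.
    apply (peq_ctx_base (a := q) (L := [LG g; LG (gdown Y h)]) (R := [LG (gmul Y g (gdown Y h))])
             (b := [LE (lam B (bidx B b))])
             (v := lam B (gminus _ (bidx B b))) (w := lam B (gminus _ (bidx B b))));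
      [apply br_mul| auto_walk..].
  - assert (HB := br_edge Y h). rewrite Hh in HB.
    apply (peq_ctx_base (a := q ++ [LG g]) (L := [LG (gdown Y h); LE (lam B (bidx B b))])
             (b := []) (v := lam B (gminus _ (bidx B b))) (w := gplus (lam B (bidx B b))) HB);
      auto_walk.
Qed.

Lemma fib_eq_edge_image q v f gb gb' : isV v -> walk dag q (lam B v) ->
  fib_eq B v f gb gb' -> fib_dom B v f gb -> half_eq (edge_image q gb) (edge_image q gb').
Proof.
  intros Hv Hq H Hd.
  refine (@clos_rst_invariant _ (fib_step B v f) (fib_dom B v f)
            (fun x y => half_eq (edge_image q x) (edge_image q y)) _ _ _ _ _ gb gb' H Hd).
  - intros x y []; tauto.
  - intros; apply half_eq_refl.
  - intros; apply half_eq_sym; auto.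
  - intros; eapply half_eq_trans; eauto.
  - intros x y Hxy _. eapply fib_step_edge_image; eauto.
Qed.

Lemma transfer_edge_decomp f t : half_ok t -> ~ isV f -> gminus _ f = half_base t ->
  exists gb, decomp f (snd t) gb /\ transfer_edge f t = edge_image (fst t) gb.
Proof.
  intros [Hv Hq] Hf Hm. unfold transfer_edge.
  destruct (excluded_middle_informative _) as [H|H].
  - destruct (constructive_indefinite_description _ H) as [gb Hgb]. exists gb; auto.
  - exfalso. apply H, decomp_exists; auto.
Qed.

Lemma transfer_edge_eq f t gb : half_ok t -> ~ isV f -> gminus _ f = half_base t ->
  decomp f (snd t) gb -> half_eq (transfer_edge f t) (edge_image (fst t) gb).
Proof.
  intros Hg Hf Hm Hd. destruct (transfer_edge_decomp Hg Hf Hm) as (gb0 & Hd0 & ->).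
  destruct Hg as [Hv Hq].
  eapply fib_eq_edge_image; [eauto|eauto| apply decomp_unique; eauto | apply Hd0].
Qed.

Lemma transfer_ok t a u : half_ok t -> walk (half_base t) [a] u ->
  half_ok (transfer a t) /\ half_base (transfer a t) = u.
Proof.
  intros Hg Hw. destruct a as [f|k]; simpl.
  - apply walk_consE in Hw as [H1 H2]. apply walk_nil_inv in H2.
    destruct (excluded_middle_informative (isV f)) as [Hf|Hf].
    + rewrite gplus_isV in H2 by auto. split; congruence.
    + destruct (transfer_edge_decomp Hg Hf (eq_sym H1)) as (gb & [Hd _] & ->).
      destruct Hg as [Hv Hq]. destruct (edge_image_ok Hv Hq Hd). split; congruence.
  - apply walk_consG in Hw as [H1 H2]. apply walk_nil_inv in H2. destruct Hg as [Hv Hq].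
    unfold half_ok, half_base in *; simpl in *. rewrite ract_idx by congruence.
    split; auto; congruence.
Qed.

Lemma transport_ok l t u : half_ok t -> walk (half_base t) l u ->
  half_ok (transport l t) /\ half_base (transport l t) = u.
Proof.
  revert t. induction l as [|a l IH]; intros t Hg Hw.
  - apply walk_nil_inv in Hw. auto.
  - rewrite transport_cons. change (a :: l) with ([a] ++ l) in Hw.
    destruct (walk_split _ _ Hw) as (w & H1 & H2).
    destruct (transfer_ok Hg H1) as [Hg' Hp]. apply IH; congruence.
Qed.

Lemma decomp_lact f c g b h : gidx Y h = lam B (bidx B c) ->
  decomp f c (g, b) -> decomp f (lact B h c) (gmul Y h g, b).
Proof.
  intros Hh [(D1 & D2 & D3) D4]. simpl in *. unfold decomp, fib_dom, fib_map in *; simpl in *.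
  rewrite lact_idx by auto. repeat split; auto.
  - rewrite gmul_idx; congruence.
  - rewrite lact_mul, D4; rewrite ?bdown_idx, ?D3; auto.
Qed.

Lemma edge_image_lact q h g b : gidx Y g = gidx Y h -> gidx Y h = lam B (gminus _ (bidx B b)) ->
  half_ok (edge_image (q ++ [LG h]) (g, b)) ->
  half_eq (edge_image (q ++ [LG h]) (g, b)) (edge_image q (gmul Y h g, b)).
Proof.
  intros Hgh Hh Hok. pose proof Hok as [Hv Hq].
  assert (HhV : isV (gidx Y h)) by (rewrite Hh; apply isV_lam, isV_gminus).
  unfold edge_image in *; simpl in *.
  rewrite <- app_assoc in Hq |- *. simpl in Hq |- *.
  apply walk_split in Hq as (w & Hq & Hw). apply walk_consG in Hw as [-> _].
  apply rst_step, hs_q; [split; auto; auto_walk..|].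
  apply peq_prefix with (v := gidx Y h); [|auto|auto_walk].
  apply (peq_ctx_base (a := []) (L := [LG h; LG g]) (R := [LG (gmul Y h g)])
           (b := [LE (lam B (bidx B b))]) (v := gidx Y h) (w := gidx Y h));
    [apply br_mul|auto_walk..].
Qed.

Lemma transfer_edge_half_step f t t' : half_step t t' -> ~ isV f -> gminus _ f = half_base t ->
  half_eq (transfer_edge f t) (transfer_edge f t').
Proof.
  intros Hs Hf Hm. destruct (half_step_ok Hs) as [Gt Gt'].
  assert (Hm' : gminus _ f = half_base t') by (unfold half_base; rewrite <- (half_step_bidx Hs); auto).
  destruct (transfer_edge_decomp Gt Hf Hm) as ([g b] & Hd & _).
  destruct Hs as [q q' c G1 G2 Hp | q h c Hh G1]; simpl in *.
  - apply half_eq_trans with (edge_image q (g, b)); [apply transfer_edge_eq; auto|].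
    apply half_eq_trans with (edge_image q' (g, b));
      [|apply half_eq_sym, transfer_edge_eq; auto].
    destruct G1, G2. apply edge_image_peq with (v := bidx B c) (f := f); auto. apply Hd.
  - apply half_eq_trans with (edge_image (q ++ [LG h]) (g, b)); [apply transfer_edge_eq; auto|].
    apply half_eq_trans with (edge_image q (gmul Y h g, b));
      [|apply half_eq_sym, transfer_edge_eq, decomp_lact; auto].
    destruct Hd as [(D1 & D2 & D3) _], G1 as [Hv Hq]. simpl in *.
    apply edge_image_lact; [congruence|congruence|].
    apply (edge_image_ok (v := bidx B c) (f := f)); auto. repeat split; auto.
Qed.

Lemma transfer_half_step t t' a u : half_step t t' -> walk (half_base t) [a] u ->
  half_eq (transfer a t) (transfer a t').
Proof.
  intros Hs Hw. destruct a as [f|k]; simpl.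
  - apply walk_consE in Hw as [H1 _].
    destruct (excluded_middle_informative (isV f)); [apply rst_step; auto|].
    apply transfer_edge_half_step; auto.
  - apply walk_consG in Hw as [H1 _]. unfold half_base in H1.
    destruct Hs as [q q' c [] [] Hp | q h c Hh []]; simpl in *; apply rst_step.
    + apply hs_q; try split; simpl; rewrite ract_idx; auto.
    + rewrite <- lract_comm by congruence. apply hs_l; try split; simpl; rewrite ract_idx; auto.
Qed.

Lemma transfer_half_eq t t' a u : half_eq t t' -> half_ok t -> walk (half_base t) [a] u ->
  half_eq (transfer a t) (transfer a t').
Proof.
  intros H Hg Hw.
  refine (@clos_rst_invariant _ half_step (fun x => half_ok x /\ walk (half_base x) [a] u)
            (fun x y => half_eq (transfer a x) (transfer a y)) _ _ _ _ _ t t' H (conj Hg Hw)).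
  - intros x y Hxy. unfold half_base. rewrite (half_step_bidx Hxy), (half_step_ok_iff Hxy). tauto.
  - intros; apply half_eq_refl.
  - intros; apply half_eq_sym; auto.
  - intros; eapply half_eq_trans; eauto.
  - intros x y Hxy [_ Hx']. eapply transfer_half_step; eauto.
Qed.

Lemma transport_half_eq l t t' u : half_eq t t' -> half_ok t -> walk (half_base t) l u ->
  half_eq (transport l t) (transport l t').
Proof.
  revert t t'. induction l as [|a l IH]; intros t t' H Hg Hw; auto.
  rewrite !transport_cons. change (a :: l) with ([a] ++ l) in Hw.
  destruct (walk_split _ _ Hw) as (w & H1 & H2).
  destruct (transfer_ok Hg H1) as [Hg' Hp].
  apply IH; [eapply transfer_half_eq; eauto|auto|congruence].
Qed.

(* b^+ = 1 (\bar b)^- decomposes b^+ along \bar{rho z}, and lam z . 1 . \bar{lam z} = 1. *)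
Lemma transfer_edge_back q b : ~ isV (bidx B b) -> walk dag q (lam B (gminus _ (bidx B b))) ->
  half_eq (transfer_edge (gbar _ (rho B (bidx B b))) (q ++ [LE (lam B (bidx B b))], bplus B b))
          (q, bdown B b).
Proof.
  intros Hz Hq. set (z := bidx B b) in *.
  assert (Hf : ~ isV (gbar _ (rho B z))) by (apply gbar_rho_not_isV; auto).
  assert (Hok : half_ok (q ++ [LE (lam B z)], bplus B b)) by (split; simpl; unfold z; auto_walk).
  eapply half_eq_trans.
  { apply transfer_edge_eq with (gb := (gone Y (lam B (bidx B (bplus B b))), bflip B b)); auto.
    - unfold half_base, z; simpl. auto_idx.
    - split; [repeat split; simpl; unfold z; auto_idx|]. unfold fib_map, bplus; apply lact_one. }
  unfold edge_image; simpl. rewrite bplus_bflip.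
  assert (Hv : isV (lam B (gminus _ z))) by (apply isV_lam, isV_gminus).
  apply rst_step, hs_q; [split; simpl; unfold z; auto_walk..|].
  rewrite <- app_assoc. simpl. rewrite <- (app_nil_r q) at 2.
  apply peq_prefix with (v := lam B (gminus _ z)); [|auto|rewrite bdown_idx; auto].
  apply peq_trans with [LE (lam B z); LE (gbar _ (lam B z))].
  - apply (peq_ctx_base (a := [LE (lam B z)]) (L := [LG (gone Y (lam B (bidx B (bplus B b))))])
             (R := []) (b := [LE (lam B (bidx B (bflip B b)))])
             (v := gplus (lam B z)) (w := gplus (lam B z)));
      [apply br_one| unfold z; auto_walk..].
  - apply peq_base; [apply br_inv| unfold z; auto_walk..].
Qed.

Lemma transfer_edge_inv x t : half_ok t -> ~ isV x -> gminus _ x = half_base t ->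
  half_eq (transfer_edge (gbar _ x) (transfer_edge x t)) t.
Proof.
  intros Hg Hx Hm. destruct (transfer_edge_decomp Hg Hx Hm) as ([g b] & [(D1 & D2 & D3) D4] & ->).
  destruct t as [q c], Hg as [Hv Hq]. unfold fib_map, edge_image in *; simpl in *. subst x.
  rewrite <- D3 in *.
  assert (Hb : ~ isV (bidx B b)) by (intro H; apply Hx, isV_rho; auto).
  replace (q ++ [LG g; LE (lam B (bidx B b))]) with ((q ++ [LG g]) ++ [LE (lam B (bidx B b))])
    by (rewrite <- app_assoc; auto).
  apply half_eq_trans with (q ++ [LG g], bdown B b).
  - apply transfer_edge_back; auto. auto_walk.
  - apply rst_step. rewrite <- D4. apply hs_l; [auto_idx|split; simpl; auto_walk].
Qed.

Lemma decomp_ract f c g b k : gidx X k = rho B (bidx B b) ->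
  decomp f c (g, b) -> decomp f (ract B c (gdown X k)) (g, ract B b k).
Proof.
  intros Hk [(D1 & D2 & D3) D4]. unfold decomp, fib_dom, fib_map in *; simpl in *.
  assert (Hk' : gidx X (gdown X k) = rho B (bidx B c))
    by (rewrite gdown_idx, Hk, <- rho_gminus, D3; auto).
  rewrite !ract_idx by auto. repeat split; auto.
  rewrite bdown_ract, lract_comm, D4 by (rewrite ?bdown_idx, ?D3; auto). auto.
Qed.

Lemma transfer_edge_ract x t k : half_ok t -> ~ isV x -> gminus _ x = half_base t -> gidx X k = x ->
  half_eq (transfer_edge x (fst t, ract B (snd t) (gdown X k)))
          (fst (transfer_edge x t), ract B (snd (transfer_edge x t)) (gplusG X k)).
Proof.
  intros Hg Hx Hm Hk. destruct (transfer_edge_decomp Hg Hx Hm) as ([g b] & Hd & ->).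
  pose proof Hd as [(D1 & D2 & D3) _]. simpl in *.
  assert (Hkb : gidx X k = rho B (bidx B b)) by congruence.
  destruct t as [q c]. simpl in *.
  assert (Hkc : gidx X (gdown X k) = rho B (bidx B c))
    by (rewrite gdown_idx, Hkb, <- rho_gminus, D3; auto).
  eapply half_eq_trans.
  - apply transfer_edge_eq; [| auto | unfold half_base in *; simpl; rewrite ract_idx; auto
                            | apply (@decomp_ract x c g b k Hkb Hd)].
    destruct Hg. split; simpl; rewrite ract_idx; auto.
  - unfold edge_image, bplus; simpl. rewrite ract_idx, bflip_ract, bdown_ract by auto_idx.
    apply half_eq_refl.
Qed.

Lemma transport_base_rel L R t u : base_rel L R -> half_ok t -> walk (half_base t) L u ->
  half_eq (transport L t) (transport R t).
Proof.
  intros HB Hg HL. destruct t as [q c]. unfold transport; simpl.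
  destruct HB as [g h | v | v Hvv | x | k]; simpl in *.
  - apply walk_consG in HL as [H1 HL]. apply walk_consG in HL as [H2 _].
    unfold half_base in *; simpl in *. rewrite ract_mul by congruence. apply half_eq_refl.
  - apply walk_consG in HL as [HL _]. rewrite gone_idx in HL. rewrite <- HL, ract_one.
    apply half_eq_refl.
  - apply walk_consE in HL as [HL _]. rewrite Hvv in HL.
    destruct (excluded_middle_informative (isV v)) as [_|]; [|tauto].
    rewrite <- HL, ract_one. apply half_eq_refl.
  - apply walk_consE in HL as [HL _].
    destruct (excluded_middle_informative (isV x)) as [Hx|Hx].
    + rewrite gbar_isV by auto. destruct (excluded_middle_informative (isV x)); [|tauto].
      apply half_eq_refl.
    + destruct (excluded_middle_informative (isV (gbar X x))) as [Hx'|_].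
      { exfalso. apply Hx, isV_gbar; auto. }
      apply transfer_edge_inv; auto.
  - apply walk_consG in HL as [HL HL']. apply walk_consE in HL' as [HL' _].
    destruct (excluded_middle_informative (isV (gidx X k))) as [Hf|Hf].
    + destruct (g_vertex_id X k Hf) as [Hd1 Hd2]. unfold gplusG. rewrite Hd2, !Hd1.
      apply half_eq_refl.
    + apply (transfer_edge_ract (t := (q, c))); auto.
Qed.

Lemma transport_peq v w l l' t : peq v w l l' -> half_ok t -> half_base t = v -> walk v l w ->
  half_eq (transport l t) (transport l' t).
Proof.
  intros H Hg Hp Hw.
  refine (@clos_rst_invariant _ (pstep v w) (fun l => walk v l w)
            (fun x y => half_eq (transport x t) (transport y t)) _ _ _ _ _ l l' H Hw).
  - intros x y []; tauto.
  - intros; apply half_eq_refl.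
  - intros; apply half_eq_sym; auto.
  - intros; eapply half_eq_trans; eauto.
  - intros x y Hs _. destruct Hs as [P Q L R HB H1 H2].
    destruct (walk_split _ _ H1) as (w1 & W1 & W2).
    destruct (walk_split _ _ W2) as (w2 & W3 & W4).
    rewrite !transport_app.
    destruct (transport_ok (l := P) (u := w1) Hg ltac:(rewrite Hp; exact W1)) as [G1 P1].
    destruct (transport_ok (l := L) (u := w2) G1 ltac:(rewrite P1; exact W3)) as [G2 P2].
    apply transport_half_eq with w; [|auto|rewrite P2; auto].
    eapply transport_base_rel; eauto. rewrite P1; eauto.
Qed.

Variable star : ggr X.

Definition collapse (s : triple B) : half := transport (snd s) (fst s).

Lemma inS_intro q b p : isV (bidx B b) -> walk dag q (lam B (bidx B b)) ->
  walk (rho B (bidx B b)) p star -> inS B dag star (q, b, p).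
Proof. intros; repeat split; auto. Qed.

Lemma tstep_inS s s' : @tstep Y X B dag star s s' -> inS B dag star s /\ inS B dag star s'.
Proof.
  destruct 1 as [q q' b p H1 H2 H3| q b p p' H1 H2 H3| q h b p Hh H1| q b k p Hk H1]; auto.
  - split; auto. destruct H1 as (A1 & A2 & A3). apply walk_snocG in A2 as [A2 _].
    apply inS_intro; rewrite lact_idx; congruence.
  - split; auto. destruct H1 as (A1 & A2 & A3). rewrite ract_idx in * by auto.
    apply inS_intro; auto. apply walk_G'; auto.
Qed.

Lemma tstep_collapse s s' : @tstep Y X B dag star s s' -> half_eq (collapse s) (collapse s').
Proof.
  destruct 1 as [q q' b p (A1 & A2 & A3) H2 (A4 & A5 & A6)| q b p p' (A1 & A2 & A3) H2 H3
                | q h b p Hh (A1 & A2 & A3)| q b k p Hk H1]; unfold collapse; simpl.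
  - apply transport_half_eq with star; [apply rst_step, hs_q|..]; try split; auto.
  - eapply transport_peq; eauto. split; auto.
  - apply transport_half_eq with star; [apply rst_step, hs_l|..]; try split; auto.
  - apply half_eq_refl.
Qed.

Lemma sim_step_collapse s s' : @sim_step Y X B dag star s s' -> half_eq (collapse s) (collapse s').
Proof.
  destruct 1 as [q b p Hz (A1 & A2 & A3) (A4 & A5 & A6)]. unfold collapse; simpl in *.
  assert (Hf : ~ isV (gbar X (rho B (bidx B b)))) by (apply gbar_rho_not_isV; auto).
  apply transport_half_eq with star; [apply half_eq_sym | split; auto | auto].
  unfold transfer. destruct (excluded_middle_informative _); [tauto|].
  apply transfer_edge_back; auto. apply walk_snocE in A5 as [A5 _]. rewrite lam_gminus. auto.
Qed.

Lemma sim_collapse s s' : sim B dag star s s' -> inS B dag star s ->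
  half_eq (collapse s) (collapse s').
Proof.
  intros H Hs.
  refine (@clos_rst_invariant _ _ (inS B dag star) (fun x y => half_eq (collapse x) (collapse y))
            _ _ _ _ _ s s' H Hs).
  - intros x y [Hxy|Hxy]; [pose proof (tstep_inS Hxy)|destruct Hxy]; tauto.
  - intros; apply half_eq_refl.
  - intros; apply half_eq_sym; auto.
  - intros; eapply half_eq_trans; eauto.
  - intros x y [Hxy|Hxy] _; [apply tstep_collapse|apply sim_step_collapse]; auto.
Qed.

Lemma teq_sim s s' : teq B dag star s s' -> sim B dag star s s'.
Proof.
  induction 1;
    [apply rst_step; left; auto|apply rst_refl|apply rst_sym; auto|eapply rst_trans; eauto].
Qed.

Lemma half_eq_sim t t' p : half_eq t t' -> half_ok t -> walk (half_base t) p star ->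
  sim B dag star (t, p) (t', p).
Proof. intros. apply teq_sim, half_eq_teq; auto. Qed.

(* The move defining ~, applied to \bar b instead of b. *)
Lemma sim_flipped_edge q b p : ~ isV (bidx B b) ->
  inS B dag star (q, bplus B b, p) ->
  inS B dag star (q ++ [LE (gbar _ (lam B (bidx B b)))], bdown B b, LE (rho B (bidx B b)) :: p) ->
  sim B dag star (q, bplus B b, p)
    (q ++ [LE (gbar _ (lam B (bidx B b)))], bdown B b, LE (rho B (bidx B b)) :: p).
Proof.
  intros Hz H1 H2. apply rst_step; right.
  assert (Hz' : ~ isV (bidx B (bflip B b))) by (rewrite bflip_idx; intro H; apply Hz, isV_gbar; auto).
  pose proof (@ss_edge Y X B dag star q (bflip B b) p Hz') as HS.
  rewrite bflip_idx, lam_gbar, rho_gbar, gbar_inv, bplus_bflip in HS. apply HS; auto.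
Qed.

Lemma sim_edge_image q c f g b p : ~ isV f -> decomp f c (g, b) ->
  isV (bidx B c) -> walk dag q (lam B (bidx B c)) -> walk (gplus f) p star ->
  sim B dag star (q, c, LE f :: p) (edge_image q (g, b), p).
Proof.
  intros Hf [(D1 & D2 & D3) D4] Hv Hq Hp. unfold fib_map, edge_image in *; simpl in *.
  subst f. rewrite <- D3 in *. rewrite <- D4.
  assert (Hb : ~ isV (bidx B b)) by (intro H; apply Hf, isV_rho; auto).
  set (e := bidx B b) in *.
  assert (In0 : inS B dag star (q ++ [LG g; LE (lam B e); LE (gbar _ (lam B e))], bdown B b,
                                LE (rho B e) :: p))
    by (apply inS_intro; unfold e; auto_walk).
  apply rst_trans with (q ++ [LG g], bdown B b, LE (rho B e) :: p).
  { apply rst_sym, rst_step; left. apply ts_l; [auto_idx|apply inS_intro; unfold e; auto_walk]. }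
  apply rst_trans
    with (q ++ [LG g; LE (lam B e); LE (gbar _ (lam B e))], bdown B b, LE (rho B e) :: p).
  { apply rst_step; left. apply ts_q; [apply inS_intro; unfold e; auto_walk| |auto].
    apply peq_sym.
    apply (peq_ctx_base (a := q ++ [LG g]) (L := [LE (lam B e); LE (gbar _ (lam B e))]) (R := [])
             (b := []) (v := lam B (gminus _ e)) (w := lam B (gminus _ e)));
      [apply br_inv|unfold e; auto_walk..]. }
  apply rst_sym.
  replace (q ++ [LG g; LE (lam B e); LE (gbar _ (lam B e))])
    with ((q ++ [LG g; LE (lam B e)]) ++ [LE (gbar _ (lam B e))]) in * by (rewrite <- app_assoc; auto).
  apply sim_flipped_edge; auto. apply inS_intro; unfold e; auto_walk.
Qed.

Lemma transfer_sim t a p : half_ok t -> walk (half_base t) (a :: p) star ->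
  sim B dag star (t, a :: p) (transfer a t, p).
Proof.
  intros Hg Hw. pose proof Hg as [Hv Hq]. destruct t as [q c]. unfold half_base in Hw; simpl in *.
  destruct a as [f|k]; simpl.
  - apply walk_consE in Hw as [H1 W2].
    destruct (excluded_middle_informative (isV f)) as [Hf|Hf].
    + assert (Hf' : gminus X f = f) by exact Hf.
      assert (Hbar : gbar X f = f) by (apply gbar_isV; auto).
      assert (Hcf : rho B (bidx B c) = f) by congruence.
      unfold gplus in W2. rewrite Hbar, Hf' in W2.
      apply rst_step; left. apply ts_p; [apply inS_intro; auto; rewrite Hcf; auto_walk| |].
      * rewrite Hcf. apply peq_trans with (LG (gone X f) :: p).
        -- apply (peq_ctx_base (a := []) (L := [LE f]) (R := [LG (gone X f)]) (b := p)
                    (v := f) (w := f)); [apply br_vertex; auto|auto_walk..].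
        -- apply (peq_ctx_base (a := []) (L := [LG (gone X f)]) (R := []) (b := p)
                    (v := f) (w := f)); [apply br_one|auto_walk..].
      * apply inS_intro; auto. rewrite Hcf. auto.
    + destruct (transfer_edge_decomp (t := (q, c)) Hg Hf (eq_sym H1)) as ([g b] & Hd & ->).
      apply sim_edge_image; auto.
  - apply walk_consG in Hw as [H1 W2].
    apply rst_sym, rst_step; left. apply ts_r; auto.
    apply inS_intro; rewrite ?ract_idx; auto.
Qed.

Lemma sim_collapse_triple t p : half_ok t -> walk (half_base t) p star ->
  sim B dag star (t, p) (transport p t, []).
Proof.
  revert t. induction p as [|a p IH]; intros t Hg Hw; [apply rst_refl|].
  eapply rst_trans; [apply transfer_sim; eauto|].
  change (a :: p) with ([a] ++ p) in Hw. destruct (walk_split _ _ Hw) as (w & W1 & W2).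
  destruct (transfer_ok Hg W1) as [G1 P1].
  rewrite transport_cons. apply IH; congruence.
Qed.

Lemma inSp_elim x p s : inSp B dag star x p s ->
  inS B dag star s /\
  exists t, half_ok t /\ half_base t = x /\ walk x p star /\ teq B dag star s (t, p).
Proof.
  intros [Hs (q & b & Hb & Hx & (A1 & A2 & A3) & Ht)]. split; auto.
  exists (q, b). repeat split; auto. rewrite <- Hx; auto.
Qed.

Lemma inSp_of_half x p t : half_ok t -> half_base t = x -> walk x p star ->
  inSp B dag star x p (t, p).
Proof.
  destruct t as [q b]. intros [Hv Hq] Hx Hp. unfold half_base in Hx; simpl in *. subst x.
  split; [apply inS_intro; auto|]. exists q, b. repeat split; auto. apply rst_refl.
Qed.

Lemma transport_word_inv x p t : half_ok t -> half_base t = x -> walk x p star ->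
  half_eq (transport (word_inv p) (transport p t)) t.
Proof.
  intros Gt Pt Wp. rewrite <- transport_app.
  apply (transport_peq (peq_word_inv_r Wp)); auto.
  apply walk_app with star; auto. apply walk_inv; auto.
Qed.

Lemma inSp_sim_teq x p s s' : inSp B dag star x p s -> inSp B dag star x p s' ->
  sim B dag star s s' -> teq B dag star s s'.
Proof.
  intros H1 H2 Hsim.
  destruct (inSp_elim H1) as [Hs (t & Gt & Pt & Wp & Tt)].
  destruct (inSp_elim H2) as [Hs' (t' & Gt' & Pt' & _ & Tt')].
  assert (HE : half_eq (transport p t) (transport p t')).
  { change (half_eq (collapse (t, p)) (collapse (t', p))).
    eapply half_eq_trans; [apply half_eq_sym, (sim_collapse (teq_sim Tt) Hs)|].
    eapply half_eq_trans; [apply (sim_collapse Hsim Hs)|].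
    apply (sim_collapse (teq_sim Tt') Hs'). }
  destruct (transport_ok (u := star) Gt ltac:(rewrite Pt; exact Wp)) as [G1 P1].
  assert (HE2 : half_eq t t').
  { eapply half_eq_trans; [apply half_eq_sym, (transport_word_inv Gt Pt Wp)|].
    eapply half_eq_trans; [|apply (transport_word_inv Gt' Pt' Wp)].
    apply transport_half_eq with x; auto. rewrite P1. apply walk_inv; auto. }
  eapply rst_trans; [exact Tt|]. eapply rst_trans; [|apply rst_sym; exact Tt'].
  apply half_eq_teq; auto. rewrite Pt; auto.
Qed.

Lemma inSp_sim_exists x p p' s : walk x p' star -> inSp B dag star x p s ->
  exists s', inSp B dag star x p' s' /\ sim B dag star s s'.
Proof.
  intros Wp' H1.
  destruct (inSp_elim H1) as [Hs (t & Gt & Pt & Wp & Tt)].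
  destruct (transport_ok (u := star) Gt ltac:(rewrite Pt; exact Wp)) as [G1 P1].
  set (ts := transport p t) in *.
  assert (Wi : walk star (word_inv p') x) by (apply walk_inv; auto).
  destruct (transport_ok (u := x) G1 ltac:(rewrite P1; exact Wi)) as [G2 P2].
  set (t' := transport (word_inv p') ts) in *.
  assert (Wl : walk (half_base ts) (word_inv p' ++ p') star)
    by (rewrite P1; apply walk_app with x; auto).
  destruct (transport_ok G1 Wl) as [G3 P3].
  exists (t', p'). split; [apply inSp_of_half; auto|].
  eapply rst_trans; [apply teq_sim; exact Tt|].
  eapply rst_trans; [apply sim_collapse_triple; auto; rewrite Pt; auto|].
  eapply rst_trans; [|apply rst_sym, sim_collapse_triple; auto; rewrite P2; auto].
  apply rst_sym. unfold t'. rewrite <- transport_app.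
  apply half_eq_sim; [|auto|rewrite P3; apply walk_nil; eapply walk_end; eauto].
  apply (transport_peq (v := star) (w := star) (l' := [])); auto.
  - rewrite <- (word_invK p') at 2. apply (peq_word_inv_r Wi).
  - apply walk_app with x; auto.
Qed.

Lemma inS_act g s : walk dag g dag -> inS B dag star s -> inS B dag star (act B g s).
Proof.
  destruct s as [[q b] p]. intros Hg (A1 & A2 & A3). simpl. repeat split; auto.
  apply walk_app with dag; auto.
Qed.

Lemma tstep_act g s s' : walk dag g dag -> @tstep Y X B dag star s s' ->
  @tstep Y X B dag star (act B g s) (act B g s').
Proof.
  intros Hg H. pose proof (tstep_inS H) as [I1 I2].
  destruct H as [q q' b p H1 H2 H3| q b p p' H1 H2 H3| q h b p Hh H1| q b k p Hk H1]; simpl in *.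
  - apply ts_q; [apply (inS_act (q, b, p) Hg H1)| |apply (inS_act (q', b, p) Hg H3)].
    apply peq_prefix with (v := dag); auto. destruct H1 as (A1 & A2 & A3). eapply walk_end; eauto.
  - apply ts_p; [apply (inS_act (q, b, p) Hg H1)|auto|apply (inS_act (q, b, p') Hg H3)].
  - rewrite app_assoc. apply ts_l; auto. rewrite <- app_assoc. apply (inS_act (_, _, _) Hg H1).
  - apply ts_r; auto. apply (inS_act (_, _, _) Hg H1).
Qed.

Lemma sim_step_act g s s' : walk dag g dag -> @sim_step Y X B dag star s s' ->
  @sim_step Y X B dag star (act B g s) (act B g s').
Proof.
  intros Hg H. destruct H as [q b p Hz H1 H2]. simpl.
  rewrite app_assoc. apply ss_edge; auto.
  - apply (inS_act (q, bdown B b, p) Hg H1).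
  - rewrite <- app_assoc. apply (inS_act (_, _, _) Hg H2).
Qed.

Lemma teq_act g s s' : walk dag g dag -> teq B dag star s s' ->
  teq B dag star (act B g s) (act B g s').
Proof.
  intros Hg. induction 1;
    [apply rst_step, tstep_act; auto|apply rst_refl|apply rst_sym; auto|eapply rst_trans; eauto].
Qed.

Lemma sim_act g s s' : walk dag g dag -> sim B dag star s s' ->
  sim B dag star (act B g s) (act B g s').
Proof.
  intros Hg. induction 1 as [x y [H|H]| | |].
  - apply rst_step; left; apply tstep_act; auto.
  - apply rst_step; right; apply sim_step_act; auto.
  - apply rst_refl.
  - apply rst_sym; auto.
  - eapply rst_trans; eauto.
Qed.

Lemma inSp_act x p g s : walk dag g dag -> inSp B dag star x p s ->
  inSp B dag star x p (act B g s).
Proof.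
  intros Hg [Hs (q & b & Hb & Hx & Hin & Ht)]. split; [apply inS_act; auto|].
  exists (g ++ q), b. split; [auto|split; [auto|split]].
  - apply (inS_act (q, b, p) Hg Hin).
  - apply (teq_act (s' := (q, b, p)) Hg Ht).
Qed.

End Transport.

Theorem mainTheorem4 (Y X : GraphOfGroups) (B : GraphOfBisets Y X) :
  left_fibrant B ->
  forall (dag : ggr Y) (star : ggr X), isV dag -> isV star ->
  forall (x : ggr X) (p1 p2 : list (letter X)),
    isV x -> walk x p1 star -> walk x p2 star ->
    (forall s1, inSp B dag star x p1 s1 ->
       exists s2, inSp B dag star x p2 s2 /\ sim B dag star s1 s2) /\
    (forall s1 s2 s2', inSp B dag star x p1 s1 -> inSp B dag star x p2 s2 ->
       inSp B dag star x p2 s2' -> sim B dag star s1 s2 -> sim B dag star s1 s2' ->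
       teq B dag star s2 s2') /\
    (forall s2, inSp B dag star x p2 s2 ->
       exists s1, inSp B dag star x p1 s1 /\ sim B dag star s1 s2) /\
    (forall s1 s1' s2, inSp B dag star x p1 s1 -> inSp B dag star x p1 s1' ->
       inSp B dag star x p2 s2 -> sim B dag star s1 s2 -> sim B dag star s1' s2 ->
       teq B dag star s1 s1') /\
    (forall (g : list (letter Y)) s1 s2, walk dag g dag ->
       inSp B dag star x p1 s1 -> inSp B dag star x p2 s2 -> sim B dag star s1 s2 ->
       inSp B dag star x p1 (act B g s1) /\ inSp B dag star x p2 (act B g s2) /\
       sim B dag star (act B g s1) (act B g s2)).
Proof.
  intros HLF dag star Hdag Hstar x p1 p2 Hx W1 W2.
  split; [|split; [|split; [|split]]].
  - intros s1 H1. eapply inSp_sim_exists; eauto.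
  - intros s1 s2 s2' H1 H2 H2' S1 S2. eapply inSp_sim_teq; eauto.
    eapply rst_trans; [apply rst_sym|]; eauto.
  - intros s2 H2. destruct (inSp_sim_exists HLF W1 H2) as (s1 & Hs1 & S).
    exists s1. split; auto. apply rst_sym; auto.
  - intros s1 s1' s2 H1 H1' H2 S1 S2. eapply inSp_sim_teq; eauto.
    eapply rst_trans; [|apply rst_sym]; eauto.
  - intros g s1 s2 Hg H1 H2 S.
    split; [|split]; [apply inSp_act|apply inSp_act|apply sim_act]; auto.
Qed.
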